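(* Let $1\le d<n$, $r=d(n-d)$, $\mathfrak C$ a maximal chain in $I(d,n)$, $\sigma=\sigma_{\mathfrak C}$, and let $1\le t\le r-1$ be such that $\sigma s_t<_R\sigma$. Then $E_t(\mathfrak C)\neq0$.
   Context: $I(d,n)$: $d$-subsets of $\{1,\dots,n\}$ as increasing sequences, ordered by $\underline i\le\underline j$ iff $i_k\le j_k$ for all $k$. Maximal chains $\underline i_r>\cdots>\underline i_0$; compared lexicographically via concatenated strings; $\mathfrak C_{\mathrm{right}}$ the smallest. Root operators $f_{s,h}$ ($1\le h\le d$, $h\le s<n-d+h$): $f_{s,h}(i_1\cdots i_d)$ replaces $i_h=s$ by $s+1$ if $i_h=s$ and ($h=d$ or $i_{h+1}\ge s+2$), else $0$. Along a maximal chain $\underline i_t=f_{s_t,h_t}(\underline i_{t-1})$, each admissible pair occurring exactly once; $\tilde f_t:=f_{s_t,h_t}$ for $\mathfrak C_{\mathrm{right}}$; $\sigma_{\mathfrak C}\in\mathsf S_r$ is defined by: the operator from $\underline i_{t-1}$ to $\underline i_t$ in $\mathfrak C$ is $\tilde f_{\sigma_{\mathfrak C}(t)}$. If the Bruhat interval $[\underline i_{t-1},\underline i_{t+1}]$ has 4 elements $\{\underline i_{t-1},\underline i_t,\underline i'_t,\underline i_{t+1}\}$ and $\underline i_t>_{lex}\underline i'_t$ (left peak), $E_t(\mathfrak C)$ is the chain with $\underline i_t$ replaced by $\underline i'_t$; otherwise $E_t(\mathfrak C)=0$. $s_t=(t,t+1)$, and $\le_R$ is the right weak Bruhat order on $\mathsf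 S_r$. *)

From mathcomp Require Import all_boot all_fingroup.
Set Implicit Arguments. Unset Strict Implicit. Unset Printing Implicit Defensive.

(* Elements of I(d,n): increasing sequences of length d with entries in 1..n.
   An element (i_1 ... i_d) is the seq [:: i_1; ...; i_d] (1-based values). *)
Definition inI (d n : nat) (x : seq nat) : bool :=
  [&& size x == d, sorted ltn x & all (fun k => 0 < k <= n) x].

(* Componentwise (Bruhat) order on I(d,n). *)
Definition leI (x y : seq nat) : bool := all2 leq x y.
Definition ltI (x y : seq nat) : bool := leI x y && (x != y).

Fixpoint allseqs (k n : nat) : seq (seq nat) :=
  if k is k'.+1 then [seq z :: w | z <- iota 1 n, w <- allseqs k' n] else [:: [::]].
Definition Ilist (d n : nat) : seq (seq nat) := [seq x <- allseqs d n | inI d n x].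

Definition interval (d n : nat) (a b : seq nat) : seq (seq nat) :=
  undup [seq x <- Ilist d n | leI a x && leI x b].

Fixpoint ltlex (x y : seq nat) : bool :=
  match x, y with
  | a :: x', b :: y' => (a < b) || ((a == b) && ltlex x' y')
  | [::], _ :: _ => true
  | _, _ => false
  end.
Definition lelex (x y : seq nat) : bool := (x == y) || ltlex x y.

(* A maximal chain, listed increasingly: C = [:: i_0; i_1; ...; i_r],
   so that i_t = nth [::] C t. *)
Definition is_max_chain (d n : nat) (C : seq (seq nat)) : Prop :=
  [/\ all (inI d n) C, sorted ltI C &
      forall x, inI d n x -> x \notin C ->
        exists2 y, y \in C & ~~ (leI x y || leI y x)].

(* C_right: the lexicographically smallest maximal chain, chains being compared
   via the concatenated strings i_r i_{r-1} ... i_0. *)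
Definition is_Cright (d n : nat) (C0 : seq (seq nat)) : Prop :=
  is_max_chain d n C0 /\
  forall C, is_max_chain d n C -> lelex (flatten (rev C0)) (flatten (rev C)).

Definition adm (d n s h : nat) : bool := [&& 1 <= h <= d, h <= s & s < n - d + h].

(* Root operator f_{s,h}; None stands for 0. *)
Definition froot (d s h : nat) (x : seq nat) : option (seq nat) :=
  if (nth 0 x h.-1 == s) && ((h == d) || (s + 2 <= nth 0 x h))
  then Some (set_nth 0 x h.-1 s.+1) else None.

(* sigma_C : step k (0-based; from i_k to i_{k+1}, i.e. paper's step k+1) of C
   is performed by the same operator f_{s,h} as step sigma(k) of C_right. *)
Definition is_sigma (d n r : nat) (C0 C : seq (seq nat)) (sigma : 'S_r) : Prop :=
  forall k : 'I_r, exists s h, [/\ adm d n s h,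
    froot d s h (nth [::] C k) = Some (nth [::] C k.+1) &
    froot d s h (nth [::] C0 (sigma k)) = Some (nth [::] C0 (sigma k).+1)].

(* Symmetric group: function composition u \o v (mathcomp's product is
   left-to-right: (p * q) x = q (p x)). *)
Definition scomp (r : nat) (u v : 'S_r) : 'S_r := (v * u)%g.

(* Coxeter length = number of inversions. *)
Definition plen (r : nat) (w : 'S_r) : nat :=
  #|[set p : 'I_r * 'I_r | (p.1 < p.2) && (w p.2 < w p.1)]|.

Definition leR (r : nat) (u w : 'S_r) : bool :=
  plen u + plen (scomp u^-1 w) == plen w.
Definition ltR (r : nat) (u w : 'S_r) : bool := leR u w && (u != w).

(* E_t(C), with t the paper's (1-based) index; None stands for 0. *)
Definition Et (d n t : nat) (C : seq (seq nat)) : option (seq (seq nat)) :=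
  let a := nth [::] C t.-1 in
  let m := nth [::] C t in
  let b := nth [::] C t.+1 in
  let I := interval d n a b in
  if (size I == 4) && [&& a \in I, m \in I & b \in I] then
    match [seq x <- I | x \notin [:: a; m; b]] with
    | [:: m'] => if ltlex m' m then Some (set_nth [::] C t m') else None
    | _ => None
    end
  else None.

From mathcomp Require Import all_boot all_fingroup zify.
Set Implicit Arguments. Unset Strict Implicit. Unset Printing Implicit Defensive.

(* Say the steps of C into i_t and i_{t+1} are f_{s,h} and f_{s',h'}.  Along
   C_right the heights never increase: two consecutive steps at heights h < h'
   span a square {a, a+e_h, a+e_h', a+e_h+e_h'} of I(d,n), and swapping the
   middle element for a+e_h' gives a lexicographically smaller maximal chain.
   A right descent of sigma at t means that f_{s',h'} comes before f_{s,h} in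
   C_right, so h <= h'.  If h = h' then s' = s+1, but the h-th coordinate
   increases along C_right.  Hence h < h', [i_{t-1}, i_{t+1}] is such a square
   and its other middle element is lexicographically smaller: a left peak. *)

Lemma leIP x y :
  reflect (size x = size y /\ forall k, nth 0 x k <= nth 0 y k) (leI x y).
Proof.
elim: x y => [|a x IH] [|b y] /=.
- by constructor; split=> // k; rewrite nth_nil.
- by constructor; case.
- by constructor; case.
apply: (iffP andP) => [[le_ab /IH[-> le_nth]]|[[eq_size] le_nth]].
  by split=> // -[].
by split; [exact: le_nth 0 | apply/IH; split=> // k; exact: le_nth k.+1].
Qed.

Lemma leI_trans : transitive leI.
Proof.
move=> y x z /leIP[sxy le_xy] /leIP[syz le_yz]; apply/leIP.
by split=> [|k]; [rewrite sxy | exact: leq_trans (le_xy k) (le_yz k)].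
Qed.

Lemma inIP d n x : reflect
  [/\ size x = d, forall k, k.+1 < d -> nth 0 x k < nth 0 x k.+1
    & forall k, k < d -> 0 < nth 0 x k <= n]
  (inI d n x).
Proof.
apply: (iffP and3P) => [[/eqP sx /(sortedP 0) x_sorted /(all_nthP 0) x_bnd]|].
  by split=> // k lt_kd; [apply: x_sorted | apply: x_bnd]; rewrite sx.
case=> sx x_sorted x_bnd; split; first by rewrite sx.
  by apply/(sortedP 0) => k; rewrite sx; apply: x_sorted.
by apply/(all_nthP 0) => k; rewrite sx; apply: x_bnd.
Qed.

Definition incr (x : seq nat) p := set_nth 0 x p (nth 0 x p).+1.

Lemma nth_incr x p k : nth 0 (incr x p) k = nth 0 x k + (k == p).
Proof. by rewrite nth_set_nth /=; case: eqP => [->|]; rewrite ?addn1 ?addn0. Qed.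

Lemma size_incr x p : p < size x -> size (incr x p) = size x.
Proof. by move=> lt_px; rewrite size_set_nth; apply/maxn_idPr. Qed.

Lemma incr_neq_nil x p : incr x p != [::].
Proof. by rewrite -size_eq0 size_set_nth -lt0n leq_max. Qed.

Lemma froot_incr d s h x y : 0 < h -> froot d s h x = Some y ->
  nth 0 x h.-1 = s /\ y = incr x h.-1.
Proof. by rewrite /froot => _; case: ifP => // /andP[/eqP <- _] [<-]. Qed.

Lemma inI_incr_swap d n a p q : p < q < d ->
  inI d n a -> inI d n (incr (incr a p) q) -> inI d n (incr a q).
Proof.
move=> /andP[lt_pq lt_qd] /inIP[sa a_sorted a_bnd] /inIP[_ b_sorted b_bnd].
apply/inIP; split=> [|k lt_kd|k lt_kd]; first by rewrite size_incr ?sa.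
  move: (a_sorted k lt_kd) (b_sorted k lt_kd); rewrite !nth_incr.
  by repeat case: eqP => ? /=; lia.
move: (a_bnd k lt_kd) (b_bnd k lt_kd); rewrite !nth_incr.
by repeat case: eqP => ? /=; lia.
Qed.

Lemma ltlex_irr x : ltlex x x = false.
Proof. by elim: x => //= a x ->; rewrite ltnn eqxx. Qed.

Lemma ltlex_asym x y : ltlex x y -> ltlex y x = false.
Proof.
elim: x y => [|a x IH] [|b y] //= /orP[lt_ab|/andP[/eqP <- lt_xy]].
  by rewrite ltnNge ltnW // eq_sym ltn_eqF.
by rewrite ltnn eqxx IH.
Qed.

Lemma ltlex_cat2l s x y : ltlex (s ++ x) (s ++ y) = ltlex x y.
Proof. by elim: s => //= a s ->; rewrite ltnn eqxx. Qed.

Lemma ltlex_catr x y x' y' : size x = size y -> ltlex x y -> ltlex (x ++ x') (y ++ y').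
Proof.
elim: x y => [|a x IH] [|b y] //= [sxy] /orP[-> //|/andP[-> lt_xy]].
by rewrite IH ?orbT.
Qed.

Lemma ltlex_nth x y p : size x = size y -> p < size x ->
  (forall k, k < p -> nth 0 x k = nth 0 y k) -> nth 0 x p < nth 0 y p -> ltlex x y.
Proof.
elim: x y p => [|a x IH] [|b y] [|p] //= [sxy] lt_px eq_xy lt_xyp; first by rewrite lt_xyp.
have /= -> := eq_xy 0 erefl; rewrite ltnn eqxx /=.
by apply: (IH y p) => // k lt_kp; apply: (eq_xy k.+1).
Qed.

Lemma ltlex_incr a p q : p < q < size a -> ltlex (incr a q) (incr a p).
Proof.
move=> /andP[lt_pq lt_qa]; have lt_pa := ltn_trans lt_pq lt_qa.
apply: (ltlex_nth (p := p)); rewrite ?size_incr //.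
  by move=> k lt_kp; rewrite !nth_incr (ltn_eqF lt_kp) (ltn_eqF (ltn_trans lt_kp lt_pq)).
by rewrite !nth_incr eqxx (ltn_eqF lt_pq) addn0 addn1.
Qed.

Lemma incr_incomparable a p q : p != q ->
  ~~ (leI (incr a p) (incr a q) || leI (incr a q) (incr a p)).
Proof.
move=> ne_pq; rewrite negb_or; apply/andP; split; apply/negP => /leIP[_ le_pq].
  by move: (le_pq p); rewrite !nth_incr eqxx (negbTE ne_pq); lia.
by move: (le_pq q); rewrite !nth_incr eqxx eq_sym (negbTE ne_pq); lia.
Qed.

Section Square.

Variables (a : seq nat) (p q : nat).
Hypothesis lt_pqa : p < q < size a.

Let m := incr a p.
Let m' := incr a q.
Let b := incr m q.

Lemma uniq_square : uniq [:: a; m; m'; b].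
Proof.
have /andP[lt_pq _] := lt_pqa.
have ne_nth x y k : nth 0 x k != nth 0 y k -> x != y by apply: contra => /eqP ->.
rewrite /= !inE !negb_or !andbT -!andbA; repeat (apply/andP; split);
  [apply: (ne_nth _ _ p) | apply: (ne_nth _ _ q) | apply: (ne_nth _ _ p)
  | apply: (ne_nth _ _ p) | apply: (ne_nth _ _ q) | apply: (ne_nth _ _ p)];
  rewrite !nth_incr eqxx ?(ltn_eqF lt_pq) ?(gtn_eqF lt_pq); lia.
Qed.

Lemma square_interval x : (leI a x && leI x b) = (x \in [:: a; m; m'; b]).
Proof.
have /andP[lt_pq lt_qa] := lt_pqa; have lt_pa := ltn_trans lt_pq lt_qa.
have [sm sm' sb] : [/\ size m = size a, size m' = size a & size b = size a].
  by rewrite /b !size_incr // size_incr.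
apply/idP/idP => [/andP[/leIP[sx ax] /leIP[_ xb]]|]; last first.
  rewrite !inE => /or4P[] /eqP->; apply/andP; split; apply/leIP;
    rewrite ?sm ?sm' ?sb; split=> // k; rewrite ?nth_incr; lia.
have x_bnd k : nth 0 a k <= nth 0 x k <= nth 0 a k + (k == p) + (k == q).
  by rewrite ax -!nth_incr xb.
have nth_x e : size e = size a -> (forall k, nth 0 x k = nth 0 e k) -> x = e.
  by move=> se xe; apply: (@eq_from_nth _ 0) => [|k _]; rewrite ?xe // se.
have := x_bnd p; have := x_bnd q; rewrite !eqxx (ltn_eqF lt_pq) (gtn_eqF lt_pq).
rewrite !inE /= => xq xp.
have [xp'|xp'] : nth 0 x p = nth 0 a p \/ nth 0 x p = (nth 0 a p).+1 by lia.
all: have [xq'|xq'] : nth 0 x q = nth 0 a q \/ nth 0 x q = (nth 0 a q).+1 by lia.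
- by rewrite (nth_x a) ?eqxx // => k; have := x_bnd k; do 2 case: eqP => ? /=; subst; lia.
- by rewrite (nth_x m') ?eqxx ?orbT // => k;
    have := x_bnd k; rewrite nth_incr; do 2 case: eqP => ? /=; subst; lia.
- by rewrite (nth_x m) ?eqxx ?orbT // => k;
    have := x_bnd k; rewrite nth_incr; do 2 case: eqP => ? /=; subst; lia.
- by rewrite (nth_x b) ?eqxx ?orbT // => k;
    have := x_bnd k; rewrite !nth_incr; do 2 case: eqP => ? /=; subst; lia.
Qed.

End Square.

Lemma mem_allseqs n x : all (fun k => 0 < k <= n) x -> x \in allseqs (size x) n.
Proof.
elim: x => [|z x IH] //= /andP[z_bnd x_bnd].
by apply: allpairs_f; [rewrite mem_iota; lia | exact: IH].
Qed.

Lemma mem_interval d n a b x :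
  (x \in interval d n a b) = [&& inI d n x, leI a x & leI x b].
Proof.
rewrite mem_undup mem_filter /Ilist mem_filter.
case Ix: (inI d n x); last by rewrite andbF.
by case/and3P: Ix => /eqP <- _ /mem_allseqs ->; rewrite !andbT.
Qed.

Lemma Et_square d n t C a p q : p < q < d ->
  inI d n a -> inI d n (incr a p) -> inI d n (incr (incr a p) q) ->
  nth [::] C t.-1 = a -> nth [::] C t = incr a p -> nth [::] C t.+1 = incr (incr a p) q ->
  Et d n t C <> None.
Proof.
move=> lt_pqd Ia Im Ib Ca Cm Cb.
have Im' := inI_incr_swap lt_pqd Ia Ib.
have lt_pqa : p < q < size a by case/inIP: Ia => ->.
set m := incr a p in Im Cm *; set m' := incr a q in Im' *; set b := incr m q in Ib Cb *.
rewrite /Et Ca Cm Cb; set I := interval d n a b.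
have memI x : (x \in I) = (x \in [:: a; m; m'; b]).
  rewrite mem_interval square_interval //; case Ix: (inI d n x) => //.
  by apply/esym/negbTE; rewrite !inE; apply: contraFN Ix => /or4P[] /eqP->.
have permI : perm_eq I [:: a; m; m'; b].
  by apply: uniq_perm; rewrite ?undup_uniq ?uniq_square.
rewrite (perm_size permI) !memI !inE !eqxx !orbT /=.
have := uniq_square lt_pqa; rewrite -/m -/m' -/b /= !inE !negb_or.
case/and4P=> /and3P[_ ne_am' _] /andP[ne_mm' _] ne_m'b _.
have -> : [seq x <- I | x \notin [:: a; m; b]] = [:: m'].
  apply: perm_small_eq => //; apply: perm_trans (perm_filter _ permI) _.
  rewrite /= !inE !eqxx !orbT /= (eq_sym m' a) (eq_sym m' m).
  by rewrite (negbTE ne_am') (negbTE ne_mm') (negbTE ne_m'b).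
by rewrite ltlex_incr.
Qed.

Lemma nth_incr_size (C : seq (seq nat)) k a p : nth [::] C k = incr a p -> k < size C.
Proof.
move=> Ck; have := incr_neq_nil a p; rewrite -Ck ltnNge.
by apply: contra => /(nth_default [::]) ->.
Qed.

Lemma max_chain_nth_inI d n C k : is_max_chain d n C -> k < size C -> inI d n (nth [::] C k).
Proof. by case=> C_inI _ _ lt_kC; apply: (allP C_inI); rewrite mem_nth. Qed.

Lemma max_chain_leI_nth d n C k l : is_max_chain d n C ->
  k < l < size C -> leI (nth [::] C k) (nth [::] C l).
Proof.
case=> _ C_sorted _ /andP[lt_kl lt_lC].
apply: (sorted_ltn_nth leI_trans) => //; last by rewrite inE (ltn_trans lt_kl).
by apply: sub_sorted C_sorted => x y /andP[].
Qed.

Section Flip.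

Variables (d n k p q : nat) (C : seq (seq nat)) (a : seq nat).
Hypotheses (Cmax : is_max_chain d n C) (lt_pqd : p < q < d).

Let m := incr a p.
Let m' := incr a q.
Let b := incr m q.
Let C' := set_nth [::] C k.+1 m'.

Hypotheses (Ca : nth [::] C k = a) (Cm : nth [::] C k.+1 = m) (Cb : nth [::] C k.+2 = b).

Let lt_k2C : k.+2 < size C. Proof. exact: nth_incr_size Cb. Qed.
Let Ia : inI d n a. Proof. by rewrite -Ca; apply: max_chain_nth_inI Cmax _; lia. Qed.
Let Ib : inI d n b. Proof. by rewrite -Cb; apply: max_chain_nth_inI Cmax _. Qed.
Let lt_pqa : p < q < size a. Proof. by case/inIP: Ia => ->. Qed.

Let decomp_C : C = take k.+1 C ++ m :: drop k.+2 C.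
Proof. by rewrite -Cm -drop_nth 1?ltnW // cat_take_drop. Qed.

Let decomp_C' : C' = take k.+1 C ++ m' :: drop k.+2 C.
Proof. by rewrite /C' set_nthE ltnW. Qed.

Let nth_C' j : nth [::] C' j = if j == k.+1 then m' else nth [::] C j.
Proof. exact: nth_set_nth. Qed.

Let size_C' : size C' = size C.
Proof. by rewrite size_set_nth; apply/maxn_idPr; apply: ltnW. Qed.

Let rest := take k.+1 C ++ drop k.+2 C.

Let mem_C' x : x \in C' = (x == m') || (x \in rest).
Proof. by rewrite decomp_C' !mem_cat inE orbCA. Qed.

Let mem_C x : x \in C = (x == m) || (x \in rest).
Proof. by rewrite {1}decomp_C !mem_cat inE orbCA. Qed.

Let in_square x : x \in [:: a; m; m'; b] -> leI a x && leI x b.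
Proof. by rewrite -square_interval. Qed.

Lemma sorted_flip : sorted ltI C'.
Proof.
have [_ C_sorted _] := Cmax.
have := uniq_square lt_pqa; rewrite -/m -/m' -/b /= !inE !negb_or.
case/and4P=> /and3P[_ ne_am' _] _ ne_m'b _.
have /andP[le_am' le_m'b] : leI a m' && leI m' b.
  by apply: in_square; rewrite !inE eqxx !orbT.
apply/(sortedP [::]) => j; rewrite size_C' => lt_jC; rewrite !nth_C'.
case: eqP => [->|ne_jk1].
  by rewrite gtn_eqF // Cb /ltI le_m'b ne_m'b.
case: eqP => [[->]|ne_j1k1]; last by move/(sortedP [::]): C_sorted; apply.
by rewrite Ca /ltI le_am' ne_am'.
Qed.

Lemma maximal_flip x : inI d n x -> x \notin C' ->
  exists2 y, y \in C' & ~~ (leI x y || leI y x).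
Proof.
have [_ _ C_max] := Cmax.
have C'_nth j : j < size C -> j != k.+1 -> nth [::] C j \in C'.
  move=> lt_jC /negbTE ne_jk1; have := nth_C' j; rewrite ne_jk1 => <-.
  by rewrite mem_nth ?size_C'.
have aC' : a \in C' by rewrite -Ca C'_nth; have := lt_k2C; lia.
have bC' : b \in C' by rewrite -Cb C'_nth; have := lt_k2C; lia.
have /andP[le_am le_mb] : leI a m && leI m b.
  by apply: in_square; rewrite !inE eqxx !orbT.
move=> Ix xC'; have [->|ne_xm] := eqVneq x m.
  exists m'; first by rewrite mem_C' eqxx.
  by apply: incr_incomparable; rewrite ltn_eqF //; case/andP: lt_pqd.
have xC : x \notin C.
  by move: xC'; rewrite mem_C mem_C' (negbTE ne_xm) => /norP[].
have [y yC incomp] := C_max x Ix xC.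
move: yC; rewrite mem_C => /orP[/eqP Ey|y_rest]; last first.
  by exists y; rewrite // mem_C' y_rest orbT.
rewrite {y}Ey in incomp.
case cmp_xa : (leI x a || leI a x); last by exists a; rewrite ?cmp_xa.
case cmp_xb : (leI x b || leI b x); last by exists b; rewrite ?cmp_xb.
have le_ax : leI a x.
  by case/orP: cmp_xa => // le_xa; move: incomp; rewrite (leI_trans le_xa le_am).
have le_xb : leI x b.
  by case/orP: cmp_xb => // le_bx; move: incomp; rewrite (leI_trans le_mb le_bx) orbT.
have : x \in [:: a; m; m'; b] by rewrite -square_interval // le_ax.
rewrite !inE (negbTE ne_xm) => /or4P[] // /eqP Ex; move: xC'; rewrite Ex.
- by rewrite aC'.
- by rewrite mem_C' eqxx.
- by rewrite bC'.
Qed.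

Lemma is_max_chain_flip : is_max_chain d n C'.
Proof.
have [C_inI _ _] := Cmax.
split; [|exact: sorted_flip|exact: maximal_flip].
apply/allP => x; rewrite mem_C' => /orP[/eqP->|x_rest].
  exact: inI_incr_swap Ia Ib.
by apply: (allP C_inI); rewrite mem_C x_rest orbT.
Qed.

Lemma ltlex_flip : ltlex (flatten (rev C')) (flatten (rev C)).
Proof.
rewrite decomp_C' [in flatten (rev C)]decomp_C.
rewrite !rev_cat !rev_cons -!cats1 !flatten_cat /= !cats0 -!catA.
rewrite ltlex_cat2l; apply: ltlex_catr; last exact: ltlex_incr.
have /andP[lt_pq lt_qa] := lt_pqa.
by rewrite !size_incr // (ltn_trans lt_pq lt_qa).
Qed.

End Flip.

Definition root_step d n (C : seq (seq nat)) k h :=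
  exists2 s, adm d n s h & froot d s h (nth [::] C k) = Some (nth [::] C k.+1).

Lemma Cright_no_ascent d n C0 k h h' : is_Cright d n C0 ->
  root_step d n C0 k h -> root_step d n C0 k.+1 h' -> h' <= h.
Proof.
case=> C0max C0min [s /and3P[/andP[h_gt0 _] _ _] F] [s' /and3P[/andP[_ le_h'd] _ _] F'].
rewrite leqNgt; apply/negP => lt_hh'.
have [_ Cm] := froot_incr h_gt0 F.
have [_ Cb] := froot_incr (leq_trans h_gt0 (ltnW lt_hh')) F'.
rewrite Cm in Cb.
have lt_pqd : h.-1 < h'.-1 < d by lia.
have lt_C'C0 := ltlex_flip C0max lt_pqd erefl Cm Cb.
case/orP: (C0min _ (is_max_chain_flip C0max lt_pqd erefl Cm Cb)) => [/eqP eq_C0C'|lt_C0C'].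
  by rewrite -eq_C0C' ltlex_irr in lt_C'C0.
by rewrite (ltlex_asym lt_C0C') in lt_C'C0.
Qed.

Lemma Cright_height_noninc d n r C0 k l h h' : is_Cright d n C0 ->
  (forall j, j < r -> exists h, root_step d n C0 j h) ->
  k < l < r -> root_step d n C0 k h -> root_step d n C0 l h' -> h' <= h.
Proof.
move=> C0r C0steps; elim: l h' => [|l IH] h' //= /andP[lt_kl1 lt_l1r] stepk stepl.
have [eq_kl|ne_kl] := eqVneq k l.
  by rewrite eq_kl in stepk; exact: Cright_no_ascent stepk stepl.
have [h'' stepl'] := C0steps l (ltnW lt_l1r).
apply: leq_trans (Cright_no_ascent C0r stepl' stepl) (IH _ _ stepk stepl') => //.
by rewrite ltn_neqAle ne_kl -ltnS lt_kl1 ltnW.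
Qed.

Lemma Et_root_steps d n C t h h' : is_max_chain d n C ->
  root_step d n C t h -> root_step d n C t.+1 h' -> h < h' -> Et d n t.+1 C <> None.
Proof.
move=> Cmax [s /and3P[/andP[h_gt0 _] _ _] F] [s' /and3P[/andP[_ le_h'd] _ _] F'] lt_hh'.
have [_ Ct1] := froot_incr h_gt0 F.
have [_ Ct2] := froot_incr (leq_trans h_gt0 (ltnW lt_hh')) F'; rewrite Ct1 in Ct2.
have C_inI k : k <= t.+2 -> inI d n (nth [::] C k).
  by move=> le_kt2; apply: max_chain_nth_inI Cmax _; have := nth_incr_size Ct2; lia.
have := C_inI _ (leqnn t.+2); have := C_inI _ (leqnSn t.+1); rewrite Ct2 Ct1 => Im Ib.
have Ia := C_inI _ (leqW (leqnSn t)).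
by apply: (@Et_square d n t.+1 C _ h.-1 h'.-1 _ Ia Im Ib erefl Ct1 Ct2); lia.
Qed.

Lemma froot_succ_same_height d s s' h x y z : 0 < h ->
  froot d s h x = Some y -> froot d s' h y = Some z -> s' = s.+1.
Proof.
move=> h_gt0 /(froot_incr h_gt0)[xs ->] /(froot_incr h_gt0)[<- _].
by rewrite nth_incr eqxx xs addn1.
Qed.

Lemma max_chain_froot_leq d n C k l s s' h : is_max_chain d n C -> 0 < h -> k < l ->
  froot d s h (nth [::] C k) = Some (nth [::] C k.+1) ->
  froot d s' h (nth [::] C l) = Some (nth [::] C l.+1) -> s <= s'.
Proof.
move=> Cmax h_gt0 lt_kl /(froot_incr h_gt0)[<- _] /(froot_incr h_gt0)[<- Cl1].
have /leIP[_ le_nth] : leI (nth [::] C k) (nth [::] C l).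
  by apply: max_chain_leI_nth Cmax _; have := nth_incr_size Cl1; lia.
exact: le_nth.
Qed.

Lemma is_sigma_root_step d n r C0 C (sigma : 'S_r) : is_sigma d n C0 C sigma ->
  forall k, k < r -> exists h, root_step d n C0 k h.
Proof.
move=> C_sigma k lt_kr; have [s [h [adm_sh _]]] := C_sigma (sigma^-1 (Ordinal lt_kr))%g.
by rewrite permKV => step; exists h, s.
Qed.

Lemma ltn_tperm_adj r (i j x y : 'I_r) : val j = (val i).+1 ->
  x < y -> (x, y) != (i, j) -> tperm i j x < tperm i j y.
Proof.
move=> /= ij; rewrite !permE /= xpair_eqE -!val_eqE /=.
by repeat case: eqP => /= ?; lia.
Qed.

Lemma plen_tperm_gt0 r (i j : 'I_r) : i < j -> 0 < plen (tperm i j).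
Proof.
by move=> lt_ij; apply/card_gt0P; exists (i, j); rewrite inE /= tpermL tpermR lt_ij.
Qed.

Lemma plen_scomp_tperm r (sg : 'S_r) (i j : 'I_r) : val j = (val i).+1 ->
  sg i < sg j -> plen sg <= plen (scomp sg (tperm i j)).
Proof.
move=> ij lt_sg; rewrite /plen.
pose t2 (u : 'I_r * 'I_r) := (tperm i j u.1, tperm i j u.2).
have t2_inj : injective t2 by apply: can_inj (t2) _ => -[x y]; rewrite /t2 /= !tpermK.
rewrite -(card_imset _ t2_inj); apply/subset_leq_card/subsetP => _ /imsetP[[x y] + ->].
rewrite !inE /= /scomp !permM !tpermK => /andP[lt_xy lt_sgyx]; rewrite lt_sgyx andbT.
apply: ltn_tperm_adj lt_xy _ => //; apply: contraTneq lt_sgyx => -[-> ->].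
by rewrite -leqNgt ltnW.
Qed.

Lemma ltR_tperm_descent r (sg : 'S_r) (i j : 'I_r) : val j = (val i).+1 ->
  ltR (scomp sg (tperm i j)) sg -> sg j < sg i.
Proof.
move=> ij /andP[/eqP + _].
have -> : scomp (scomp sg (tperm i j))^-1 sg = tperm i j.
  by rewrite /scomp invMg tpermV mulgA mulgV mul1g.
have lt_ij : i < j by rewrite ij.
move=> len_sg; have := plen_tperm_gt0 lt_ij.
case: (ltngtP (sg i) (sg j)) => // [lt_sg|/val_inj/perm_inj eq_ij].
  by have := plen_scomp_tperm ij lt_sg; lia.
by rewrite eq_ij ltnn in lt_ij.
Qed.

Theorem proposition2p31 (d n : nat) (C0 C : seq (seq nat))
    (sigma : 'S_(d * (n - d))) (i j : 'I_(d * (n - d))) :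
  1 <= d < n ->
  is_Cright d n C0 ->
  is_max_chain d n C ->
  is_sigma d n C0 C sigma ->
  val j = (val i).+1 ->
  ltR (scomp sigma (tperm i j)) sigma ->
  Et d n (val i).+1 C <> None.
Proof.
move=> _ C0r Cmax C_sigma ij desc_t; rewrite /= in ij *.
have lt_sg := ltR_tperm_descent ij desc_t.
have [s1 [h1 [adm1 F1 G1]]] := C_sigma i.
have [s2 [h2 [adm2 F2 G2]]] := C_sigma j; rewrite ij in F2.
have le_h1h2 : h1 <= h2.
  apply: (Cright_height_noninc C0r (is_sigma_root_step C_sigma) (k := sigma j) (l := sigma i)).
  - by rewrite lt_sg ltn_ord.
  - by exists s2.
  - by exists s1.
case: (ltngtP h1 h2) le_h1h2 => [lt_h1h2|//|eq_h1h2] _.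
  by apply: (Et_root_steps Cmax _ _ lt_h1h2); [exists s1 | exists s2].
have h1_gt0 : 0 < h1 by case/and3P: adm1 => /andP[].
rewrite -{}eq_h1h2 in F2 G2.
have := froot_succ_same_height h1_gt0 F1 F2.
have := max_chain_froot_leq C0r.1 h1_gt0 lt_sg G2 G1.
lia.
Qed.
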